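(* Let $K>1$ and let $\kappa=(x_i)_{i\in\mathbb Z}$ and $\eta=(y_i)_{i\in\mathbb Z}$ be independent $K$-contracting axes in a geodesic metric space $X$. Then there exists $K'>0$ such that: (1) for every set $J$ of consecutive integers, $\kappa|_J=(x_i)_{i\in J}$ and $\eta|_J=(y_i)_{i\in J}$ are $K'$-contracting axes; (2) for every set $J$ of consecutive integers containing $0$, $\operatorname{diam}\big(x_0\cup\pi_{\kappa|_J}(\eta)\big)<K'$; (3) for every positive integer $M$, $\operatorname{diam}\big(x_0\cup\pi_{\{x_0,\ldots,x_M\}}(\{x_i:i\le0\})\big)<K'$.
   Context: $X$ is a geodesic metric space. For $A\subseteq X$, $\pi_A(z)=\{a\in A:d(z,a)=d(z,A)\}$ and $\pi_A(B)=\bigcup_{b\in B}\pi_A(b)$. $A$ is $K$-contracting if $\pi_A(z)\ne\emptyset$ for all $z$ and $d(x,y)\le d(x,A)-K$ implies $\operatorname{diam}(\pi_A(x)\cup\pi_A(y))\le K$. A $K$-contracting axis indexed by a set $J$ of consecutive integers is a family $(x_i)_{i\in J}$ with $|i-j|/K-K\le d(x_i,x_j)\le K|i-j|+K$ whose image is $K$-contracting; projections onto it mean onto its image. Sequences $(x_i),(y_i)$ indexed by $\mathbb Z$ are independent if for every $M>0$ the set $\{(n,m):d(x_n,y_m)<M\}$ is bounded. *)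

From HB Require Import structures.
From mathcomp Require Import all_boot all_order all_algebra.
From mathcomp Require Import all_classical all_reals.
From mathcomp Require Import ereal.
Set Implicit Arguments. Unset Strict Implicit. Unset Printing Implicit Defensive.
Import Order.TTheory GRing.Theory Num.Theory.
Local Open Scope classical_set_scope.
Local Open Scope ring_scope.

Section Geo.
Variables (R : realType) (T : Type) (d : T -> T -> R).

Definition is_metric : Prop :=
  (forall x y, 0 <= d x y) /\ (forall x y, d x y = 0 <-> x = y) /\
  (forall x y, d x y = d y x) /\ (forall x y z, d x z <= d x y + d y z).

Definition geodesic : Prop :=
  forall x y, exists g : R -> T, g 0 = x /\ g (d x y) = y /\
    forall s t, 0 <= s <= d x y -> 0 <= t <= d x y ->
      d (g s) (g t) = `|s - t|.

Definition dist_set (z : T) (A : set T) : \bar R :=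
  ereal_inf [set (d z a)%:E | a in A].

Definition diam (S : set T) : \bar R :=
  ereal_sup [set (d a b)%:E | a in S & b in S].

Definition proj (A : set T) (z : T) : set T :=
  [set a | A a /\ (d z a)%:E = dist_set z A].

Definition proj_set (A B : set T) : set T :=
  \bigcup_(b in B) proj A b.

Definition contracting (K : R) (A : set T) : Prop :=
  (forall z, exists a, proj A z a) /\
  (forall x y, ((d x y)%:E <= dist_set x A - K%:E)%E ->
     (diam (proj A x `|` proj A y) <= K%:E)%E).

Definition consecutive (J : set int) : Prop :=
  (exists i, J i) /\ (forall i j k, J i -> J k -> i <= j <= k -> J j).

Definition contracting_axis (K : R) (J : set int) (x : int -> T) : Prop :=
  (forall i j, J i -> J j ->
     (`|i - j|%:~R / K - K <= d (x i) (x j)) /\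
     (d (x i) (x j) <= K * `|i - j|%:~R + K)) /\
  contracting K (x @` J).

Definition independent (x y : int -> T) : Prop :=
  forall M : R, 0 < M -> exists B : int, forall n m : int,
    d (x n) (y m) < M -> `|n| <= B /\ `|m| <= B.

End Geo.

(* Contracting sets have the bounded geodesic image property: projections of [z]
   and [w] onto a [K]-contracting set are [2K]-close unless going from [z] to [w]
   through both projections costs only [O(K)] more than [d z w].  This is proved by
   walking along a geodesic in steps of length [d(., A) - K], over which the
   projection moves by at most [K].  On an axis it gives a Morse-type estimate, and
   the projection onto a sub-axis [x @` J] is then close to [x c], where [c] clamps
   into [J] the index of the projection onto the whole axis; this yields (1).
   Independence bounds the indices of the projections of [y] onto [x]: otherwise a
   geodesic between two points of [y] would pass close to points of [x] of large
   index.  Since [0] lies in [J], clamping keeps these indices bounded, which gives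
   (2); and indices [<= 0] clamp to [0] in [[0, M]], which gives (3). *)

From Pilot Require Import Defs.
From mathcomp Require Import all_boot all_order all_algebra.
From mathcomp Require Import all_classical all_reals.
From mathcomp Require Import ereal.
From mathcomp Require Import lra zify.
Import Order.TTheory GRing.Theory Num.Theory.
Local Open Scope classical_set_scope.
Local Open Scope ring_scope.
Set Implicit Arguments. Unset Strict Implicit. Unset Printing Implicit Defensive.
(* Without it, [proj] would denote the projection of mathcomp_extra. *)
Local Notation proj := Defs.proj.

Lemma int_min (P : int -> Prop) i : (exists j, P j) -> (forall j, P j -> i <= j) ->
  exists2 a, P a & forall j, P j -> a <= j.
Proof.
move=> [j hj] hlb; have hex : exists n : nat, `[< P (i + n%:Z) >].
  by exists `|j - i|%N; apply/asboolP; have -> : i + `|j - i|%N = j by have := hlb j hj; lia.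
case: (ex_minnP hex) => n /asboolP hn hmin; exists (i + n) => // k hk.
have hik := hlb k hk; have /hmin : `[< P (i + `|k - i|%N%:Z) >].
  by apply/asboolP; have -> : i + `|k - i|%N = k by lia.
lia.
Qed.

Lemma int_max (P : int -> Prop) i : (exists j, P j) -> (forall j, P j -> j <= i) ->
  exists2 a, P a & forall j, P j -> j <= a.
Proof.
move=> [j hj] hub.
have hex : exists k, P (- k) by exists (- j); rewrite opprK.
have hlb k : P (- k) -> - i <= k by move/hub; lia.
have [k hk hmin] := int_min hex hlb.
by exists (- k) => // l hl; have := hmin (- l); rewrite opprK => /(_ hl); lia.
Qed.

Definition between (i a k : int) := (i <= a <= k) \/ (k <= a <= i).

(* For consecutive [J], [clamp J i c] says that [c] is the point of [J] nearest to [i]. *)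
Definition clamp (J : set int) (i c : int) :=
  J c /\ [\/ c = i, i < c /\ (forall j, J j -> c <= j) | c < i /\ (forall j, J j -> j <= c)].

Lemma clamp_exists J i : consecutive J -> exists c, clamp J i c.
Proof.
move=> [hne hJ]; case: (pselect (J i)) => hi; first by exists i; split => //; apply: Or31.
case: (pselect (exists2 j, J j & j < i)) => [[j hj hji]|hnone].
  have hlt k : J k -> k < i.
    move=> hk; rewrite ltNge; apply/negP => hik; apply: hi.
    by apply: (hJ j i k) => //; apply/andP; split => //; apply: ltW.
  have [c hc hmax] := int_max hne (fun k hk => ltW (hlt k hk)).
  by exists c; split => //; apply: Or33; split => //; apply: hlt.
have hgt k : J k -> i < k.
  move=> hk; rewrite ltNge le_eqVlt; apply/negP => /orP[/eqP ek|hki].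
    by apply: hi; rewrite -ek.
  by apply: hnone; exists k.
have [c hc hmin] := int_min hne (fun k hk => ltW (hgt k hk)).
by exists c; split => //; apply: Or32; split => //; apply: hgt.
Qed.

Lemma clamp_between J i c j : clamp J i c -> J j -> between i c j.
Proof.
by move=> [_ hci] hj; case: hci => [->|[? /(_ j hj) ?]|[? /(_ j hj) ?]]; rewrite /between; lia.
Qed.

Lemma clamp_lipschitz J i k c c' : clamp J i c -> clamp J k c' -> `|c - c'| <= `|i - k|.
Proof.
move=> [hc hci] [hc' hck].
case: hci => [?|[? /(_ c' hc') ?]|[? /(_ c' hc') ?]];
  case: hck => [?|[? /(_ c hc) ?]|[? /(_ c hc) ?]]; lia.
Qed.

Lemma clamp_outside J i k c c' : clamp J i c -> clamp J k c' -> ~ between i c k -> c = c'.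
Proof.
rewrite /between => -[hc hci] [hc' hck] hnb.
case: hci => [?|[? /(_ c' hc') ?]|[? /(_ c' hc') ?]];
  case: hck => [?|[? /(_ c hc) ?]|[? /(_ c hc) ?]]; subst; lia.
Qed.

Lemma int_seq_crossing (R : realType) (S : nat -> int -> Prop) (D : R) a N :
  (forall n, exists j, S n j) ->
  (forall n j j', S n j -> S n j' \/ S n.+1 j' -> `|j - j'|%:~R <= D) ->
  (exists2 j, S 0%N j & j <= a) -> (exists2 j, S N j & a <= j) ->
  exists n j, S n j /\ `|j - a|%:~R <= D.
Proof.
move=> hS hD [j0 hj0 hj0a]; elim: N => [|N IH] [j hj haj].
  exists 0%N, j; split => //; apply: le_trans (hD _ _ _ hj (or_introl hj0)).
  by rewrite ler_int; lia.
have [jN hjN] := hS N; have [haN|hNa] := lerP a jN; first by apply: IH; exists jN.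
exists N.+1, j; split => //; apply: le_trans (hD _ _ _ hjN (or_intror hj)).
by rewrite ler_int; lia.
Qed.

Lemma int_window_argmin (R : realType) (P : int -> Prop) (f : int -> R) c (n : nat) :
  P c -> exists2 b, P b & forall j, P j -> `|j - c| <= n -> f b <= f j.
Proof.
move=> hc; pose Q (i : 'I_(n.*2.+1)) := `[< P (c - n%:Z + (i : nat)%:Z) >].
have hQ : Q (inord n).
  by apply/asboolP; rewrite inordK; [have -> : c - n%:Z + n%:Z = c by lia|lia].
have [i /asboolP hi hmin] := arg_minP (fun i : 'I_(n.*2.+1) => f (c - n%:Z + (i : nat)%:Z)) hQ.
exists (c - n%:Z + (i : nat)%:Z) => // j hj hjc.
have hk : (absz (j - c + n%:Z)%R < n.*2.+1)%N by lia.
have := hmin (inord (absz (j - c + n%:Z)%R)).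
rewrite /Q inordK // (_ : c - n%:Z + _ = j); last by lia.
by apply; apply/asboolP.
Qed.

Lemma min_natr_step (R : realType) (L : R) n : 0 <= L ->
  `|Num.min n%:R L - Num.min n.+1%:R L| <= 1.
Proof.
move=> hL; rewrite -natr1 !minEle; have hn : (0 : R) <= n%:R by [].
by case: ifP => h1; case: ifP => h2; rewrite ler_norml; apply/andP; split; lra.
Qed.

Section Metric.
Variables (R : realType) (T : Type) (d : T -> T -> R).
Hypothesis hmet : is_metric d.

Lemma dist_ge0 a b : 0 <= d a b. Proof. by case: hmet. Qed.
Lemma distC a b : d a b = d b a. Proof. by case: hmet => _ [_ []]. Qed.
Lemma dist_triangle a b c : d a c <= d a b + d b c.
Proof. by case: hmet => _ [_ [_]]. Qed.
Lemma distxx a : d a a = 0. Proof. by case: hmet => _ [h _]; apply/h. Qed.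

Lemma geodesic_point z w t : geodesic d -> 0 <= t <= d z w ->
  exists m, d z m = t /\ d m w = d z w - t.
Proof.
move=> /(_ z w) [g [g0 [gL hg]]] /andP[ht0 htL]; exists (g t).
have hL := dist_ge0 z w.
have h0 : (0 : R) <= 0 <= d z w by apply/andP; split.
have ht : (0 : R) <= t <= d z w by apply/andP; split.
have hL' : (0 : R) <= d z w <= d z w by apply/andP; split.
split; first by rewrite -g0 hg // sub0r normrN ger0_norm.
by rewrite -{1}gL hg // distrC ger0_norm ?subr_ge0.
Qed.

Lemma diam_le_ball (S : set T) c r :
  (forall a, S a -> d c a <= r) -> (diam d S <= (2 * r)%:E)%E.
Proof.
move=> hS; apply: ge_ereal_sup => _ [a ha [b hb] <-]; rewrite lee_fin.
have := dist_triangle a c b; rewrite (distC a c); have := hS a ha; have := hS b hb; lra.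
Qed.

Section Projection.
Variable A : set T.

Lemma proj_mem z p : proj d A z p -> A p. Proof. by case. Qed.

Lemma proj_le z p a : proj d A z p -> A a -> d z p <= d z a.
Proof. by case=> _ hp ha; rewrite -lee_fin hp; apply: ereal_inf_lbound; exists a. Qed.

Lemma projP z p : A p -> (forall a, A a -> d z p <= d z a) -> proj d A z p.
Proof.
move=> hp hmin; split => //; apply/le_anti/andP; split.
  by apply/ereal_infP => _ [a ha <-]; rewrite lee_fin; apply: hmin.
by apply: ereal_inf_lbound; exists p.
Qed.

Lemma proj_id a : A a -> proj d A a a.
Proof. by move=> ha; apply: projP => // b _; rewrite distxx dist_ge0. Qed.

Lemma dist_set_proj z p : proj d A z p -> dist_set d z A = (d z p)%:E.
Proof. by case. Qed.

Lemma proj_dist_eq z p q : proj d A z p -> proj d A z q -> d z p = d z q.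
Proof.
move=> hp hq; apply/le_anti.
by rewrite (proj_le hp (proj_mem hq)) (proj_le hq (proj_mem hp)).
Qed.

Lemma proj_dist_le u v p q : proj d A u p -> proj d A v q -> d u p <= d u v + d v q.
Proof. by move=> hp hq; apply: le_trans (dist_triangle _ v _); apply: proj_le hp (proj_mem hq). Qed.

End Projection.
End Metric.

Section Contracting.
Variables (R : realType) (T : Type) (d : T -> T -> R).
Hypotheses (hmet : is_metric d) (hgeo : geodesic d).
Variables (K : R) (A : set T).
Hypotheses (hK : 0 < K) (hA : contracting d K A).

(* [lra] ignores section hypotheses, so the positivity of [K] is passed explicitly. *)
Local Ltac lraK := have ? := hK; lra.

Lemma proj_exists z : exists p, proj d A z p. Proof. by case: hA => h _; apply: h. Qed.

Lemma contracting_proj u v p a b : proj d A u p -> d u v <= d u p - K ->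
  proj d A u a \/ proj d A v a -> proj d A u b \/ proj d A v b -> d a b <= K.
Proof.
move=> hp huv ha hb; case: hA => _ /(_ u v).
rewrite (dist_set_proj hp) -EFinD lee_fin => /(_ huv) hdiam.
by rewrite -lee_fin; apply: le_trans hdiam; apply: ereal_sup_ubound; exists a => //; exists b.
Qed.

Lemma proj_diam z a b : proj d A z a -> proj d A z b -> d a b <= 2 * K.
Proof.
move=> ha hb; have [hza|hza] := lerP K (d z a).
  suff hab : d a b <= K by lraK.
  by apply: (contracting_proj (v := z) ha); rewrite ?(distxx hmet); [lraK|left|right].
have := proj_dist_eq ha hb; have := dist_triangle hmet a z b; rewrite (distC hmet a z); lraK.
Qed.

Lemma proj_jump u v p q : d u v <= 1 -> proj d A u p -> proj d A v q -> d p q <= 2 * K + 4.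
Proof.
move=> huv hp hq; have [hfar|hnear] := lerP 1 (d u p - K).
  suff hpq : d p q <= K by lraK.
  by apply: (contracting_proj (v := v) hp); [lraK|left|right].
have := proj_dist_le hmet hq hp; have := dist_triangle hmet p u q; have := dist_triangle hmet u v q.
rewrite (distC hmet p u) (distC hmet v u); lraK.
Qed.

Definition near_set m := exists2 u, proj d A m u & d m u <= 2 * K.

(* Along a geodesic from [z] staying [2K]-far from [A], the distance to [A] drops at
   least as fast as the projection moves; this is the invariant of the walk. *)
Definition proj_progress z p m :=
  forall u, proj d A m u -> d z p + d p u <= d z m + 6 * K.

Definition walk_outcome z p m :=
  [\/ exists2 m', near_set m' & proj_progress z p m' /\ d z m' + d m' m <= d z m,
      proj_progress z p m
    | d z m <= d z p - K /\ forall u, proj d A m u -> d p u <= K].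

Lemma walk_base z p m : proj d A z p -> d z p <= 2 * K \/ d z m <= d z p - K ->
  walk_outcome z p m.
Proof.
move=> hp [hzp|hzm].
  apply: Or31; exists z; first by exists p.
  split; last by rewrite (distxx hmet) add0r.
  by move=> u hu; have := proj_diam hp hu; rewrite (distxx hmet); lraK.
apply: Or33; split => // u hu.
by apply: (contracting_proj (v := m) hp) => //; [left|right].
Qed.

Lemma walk_step z p m : proj d A z p -> 2 * K < d z p -> d z p - K < d z m ->
  exists z1, [/\ d z z1 = d z p - K, d z z1 + d z1 m = d z m &
                 forall u, proj d A z1 u -> d p u <= K].
Proof.
move=> hp hzp hzm.
have ht : 0 <= d z p - K <= d z m by apply/andP; split; lraK.
have [z1 [hz1 hz1m]] := geodesic_point hmet hgeo ht.
exists z1; split => //; first lraK.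
by move=> u hu; apply: (contracting_proj (v := z1) hp); [lraK|left|right].
Qed.

Lemma walk z p m : proj d A z p -> walk_outcome z p m.
Proof.
have [n] : exists n : nat, d z m <= n%:R * K.
  by exists (Num.truncn (d z m / K)).+1; rewrite -ler_pdivrMr // ltW // truncnS_gt.
elim: n z p => [|n IH] z p hn hp.
  apply: walk_base => //; have [hzp|hzp] := lerP (d z p) (2 * K); [left | right] => //.
  by move: hn; rewrite mul0r; lraK.
have [hzp|hzp] := lerP (d z p) (2 * K); first exact: walk_base hp (or_introl hzp).
have [hzm|hzm] := lerP (d z m) (d z p - K); first exact: walk_base hp (or_intror hzm).
have [z1 [hz1 hz1m hpz1]] := walk_step hp hzp hzm.
have [p1 hp1] := proj_exists z1; have hpp1 := hpz1 _ hp1.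
have hp_u u : d p u <= K + d p1 u by have := dist_triangle hmet p p1 u; lraK.
have [hz1p1|hz1p1] := lerP (d z1 p1) (2 * K).
  apply: Or31; exists z1; first by exists p1.
  by split; [move=> u /hpz1; lraK | lraK].
have hn1 : d z1 m <= n%:R * K by move: hn; rewrite -natr1 mulrDl mul1r; lraK.
case: (IH z1 p1 hn1 hp1) => [[m' hm' [hprog hm'm]]|hprog|[hfar hclose]].
- have hzm' : d z z1 + d z1 m' <= d z m' by have := dist_triangle hmet z m' m; lraK.
  apply: Or31; exists m' => //; split; last by have := dist_triangle hmet z z1 m'; lraK.
  by move=> u hu; have := hprog u hu; have := hp_u u; lraK.
- by apply: Or32 => u hu; have := hprog u hu; have := hp_u u; lraK.
- by apply: Or32 => u hu; have := hclose u hu; have := hp_u u; lraK.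
Qed.

Lemma dist_via_proj z p a : A a -> proj d A z p -> d z p + d p a <= d z a + 8 * K.
Proof.
move=> ha hp; case: (walk a hp) => [[m [u hu hmu] [hprog hm]]|hprog|[hfar _]].
- have := hprog u hu; have := dist_triangle hmet p u a; have := dist_triangle hmet u m a.
  by rewrite (distC hmet u m); lraK.
- by have := hprog a (proj_id hmet ha); lraK.
- by have := proj_le hp ha; lraK.
Qed.

Lemma proj_near_between a b m p : A a -> A b -> d a m + d m b <= d a b ->
  proj d A m p -> d m p <= 8 * K.
Proof.
move=> ha hb hm hp; have := dist_via_proj ha hp; have := dist_via_proj hb hp.
have := dist_triangle hmet a p b; rewrite (distC hmet a p) (distC hmet m a); lraK.
Qed.

Lemma proj_close_of_short z w p q : proj d A z p -> proj d A w q ->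
  d z w <= d z p + d w q - 2 * K -> d p q <= 2 * K.
Proof.
move=> hp hq hzw.
have [hz|hz] := lerP (d z w) (d z p - K).
  suff : d p q <= K by lraK.
  by apply: (contracting_proj (v := w) hp) => //; [left|right].
have [hw|hw] := lerP (d z w) (d w q - K).
  suff : d q p <= K by rewrite distC //; lraK.
  by apply: (contracting_proj (v := z) hq); rewrite ?(distC hmet w z) //; [left|right].
have ht : 0 <= d z p - K <= d z w by apply/andP; split; lraK.
have [m [hzm hmw]] := geodesic_point hmet hgeo ht; have [u hu] := proj_exists m.
have hpu : d p u <= K by apply: (contracting_proj (v := m) hp); [lraK|left|right].
have hqu : d q u <= K.
  by apply: (contracting_proj (v := m) hq); [rewrite distC //; lraK|left|right].
by have := dist_triangle hmet p u q; rewrite (distC hmet u q); lraK.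
Qed.

Lemma detour_near_point z w m p q : proj d A z p -> proj d A w q ->
  near_set m -> proj_progress w q m ->
  d z p + d w q + d p q <= d z m + d m w + 16 * K.
Proof.
move=> hp hq [v hv hmv] hprog; have hw := hprog v hv.
have hpq := dist_triangle hmet p v q; rewrite (distC hmet v q) in hpq.
rewrite (distC hmet m w).
case: (walk m hp) => [[m' [u hu hm'u] [hprog' hm']]|hprogz|[hfar hclose]].
- have := hprog' u hu; have := dist_triangle hmet p u v; have := dist_triangle hmet u m' v.
  have := dist_triangle hmet m' m v; rewrite (distC hmet u m'); lraK.
- by have := hprogz v hv; lraK.
- have := hclose v hv; have := proj_le hp (proj_mem hv); have := dist_triangle hmet z m v.
  lraK.
Qed.

Lemma bounded_geodesic_image z w p q : proj d A z p -> proj d A w q ->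
  d p q <= 2 * K \/ d z p + d w q + d p q <= d z w + 16 * K.
Proof.
move=> hp hq; have [hshort|hlong] := lerP (d z w) (d z p + d w q - 2 * K).
  by left; apply: proj_close_of_short hp hq hshort.
right; have hzw := proj_dist_le hmet hp hq; have hwz := proj_dist_le hmet hq hp.
rewrite (distC hmet w z) in hwz.
(* [mid] is chosen so that the last outcome of [walk] is excluded from both ends. *)
have hs : 0 <= (d z p + d z w - d w q) / 2 <= d z w by apply/andP; split; lraK.
have [mid [hzmid hmidw]] := geodesic_point hmet hgeo hs.
have [u hu] := proj_exists mid.
case: (walk mid hp) => [[m hm [hprogm hmmid]]|hprogz|[hfar _]]; last by lraK.
  have := detour_near_point hq hp hm hprogm; have := dist_triangle hmet w mid m.
  by rewrite (distC hmet q p) (distC hmet m z) (distC hmet mid m) (distC hmet w mid); lraK.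
case: (walk mid hq) => [[m hm [hprogm hmmid]]|hprogw|[hfar _]].
- have := detour_near_point hp hq hm hprogm; have := dist_triangle hmet z mid m.
  by rewrite (distC hmet w mid) in hmmid; rewrite (distC hmet m w) (distC hmet mid m); lraK.
- have := hprogz u hu; have := hprogw u hu; have := dist_triangle hmet p u q.
  by rewrite (distC hmet u q) (distC hmet w mid); lraK.
- by rewrite (distC hmet w mid) in hfar; lraK.
Qed.


Lemma proj_near_of_between z m w p q r : d z m + d m w <= d z w ->
  proj d A z p -> proj d A m q -> proj d A w r -> 2 * K < d p q -> 2 * K < d q r ->
  d m q <= 16 * K.
Proof.
move=> hm hp hq hr hpq hqr.
case: (bounded_geodesic_image hp hq) => [|h1]; first by lraK.
case: (bounded_geodesic_image hq hr) => [|h2]; first by lraK.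
have := dist_triangle hmet z p w; have := dist_triangle hmet p r w.
have := dist_triangle hmet p q r; rewrite (distC hmet r w); lraK.
Qed.

End Contracting.

Section Axis.
Variables (R : realType) (T : Type) (d : T -> T -> R).
Hypotheses (hmet : is_metric d) (hgeo : geodesic d).
Variables (K : R) (x : int -> T).
Hypotheses (hK : 1 < K) (hx : contracting_axis d K setT x).
Local Ltac lraK := have ? := hK; lra.

Lemma K_gt0 : 0 < K. Proof. lraK. Qed.

Lemma axis_contracting : contracting d K (range x). Proof. by case: hx. Qed.

Lemma axis_mem i : range x (x i). Proof. by exists i. Qed.

Lemma axis_dist_ge i j : `|i - j|%:~R / K - K <= d (x i) (x j).
Proof. by case: hx => /(_ i j I I) []. Qed.

Lemma axis_dist_le i j : d (x i) (x j) <= K * `|i - j|%:~R + K.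
Proof. by case: hx => /(_ i j I I) []. Qed.

Lemma axis_index_le i j c : d (x i) (x j) <= c -> `|i - j|%:~R <= K * (c + K).
Proof.
move=> h; rewrite mulrC -ler_pdivrMr ?K_gt0 //; have := axis_dist_ge i j; lraK.
Qed.

Lemma axis_dist_gt i j c : K * (c + K) < `|i - j|%:~R -> c < d (x i) (x j).
Proof. by move=> hij; rewrite ltNge; apply/negP => /axis_index_le; lra. Qed.

Lemma proj_axis_exists z : exists j, proj d (range x) z (x j).
Proof. by have [_ [[j _ <-] hj]] := proj_exists axis_contracting z; exists j. Qed.

Definition jump_const := K * (3 * K + 4).

Lemma jump_const_ge0 : 0 <= jump_const.
Proof. by rewrite /jump_const mulr_ge0 //; lraK. Qed.

Lemma proj_index_jump u v j j' : d u v <= 1 ->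
  proj d (range x) u (x j) -> proj d (range x) v (x j') -> `|j - j'|%:~R <= jump_const.
Proof.
move=> huv hj hj'; rewrite /jump_const (_ : 3 * K + 4 = 2 * K + 4 + K); last by lra.
exact/axis_index_le/(proj_jump hmet K_gt0 axis_contracting huv).
Qed.

Lemma proj_index_crossing z w i k a : proj d (range x) z (x i) -> proj d (range x) w (x k) ->
  i <= a <= k -> exists m j, [/\ d z m + d m w = d z w, proj d (range x) m (x j)
                               & `|j - a|%:~R <= jump_const].
Proof.
(* Sampled at integer times, the geodesic moves by at most [1] between samples, so
   the indices of the projections jump by at most [jump_const]. *)
move=> hz hw /andP[hia hak]; have [g [g0 [gL hg]]] := hgeo z w.
have hL := dist_ge0 hmet z w.
have hsample n : 0 <= Num.min n%:R (d z w) <= d z w.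
  by rewrite le_min ler0n hL ge_min lexx orbT.
have hgz n : d z (g (Num.min n%:R (d z w))) = Num.min n%:R (d z w).
  have /andP[h0 _] := hsample n.
  by rewrite -{1}g0 hg ?hsample ?lexx ?hL // sub0r normrN ger0_norm.
have hgw n : d (g (Num.min n%:R (d z w))) w = d z w - Num.min n%:R (d z w).
  have /andP[_ h1] := hsample n.
  by rewrite -[X in d _ X = _]gL hg ?hsample ?lexx ?hL // distrC ger0_norm // subr_ge0.
pose N := (Num.truncn (d z w)).+1.
have hN : Num.min N%:R (d z w) = d z w by apply/min_r/ltW/truncnS_gt.
suff [n [j [hj hja]]] : exists n j,
    proj d (range x) (g (Num.min n%:R (d z w))) (x j) /\ `|j - a|%:~R <= jump_const.
  by exists (g (Num.min n%:R (d z w))), j; split => //; rewrite hgz hgw; lra.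
apply: (int_seq_crossing (N := N)).
- by move=> n; apply: proj_axis_exists.
- move=> n j j' hj [hj'|hj']; apply: proj_index_jump hj hj'.
    by rewrite (distxx hmet).
  by rewrite hg ?hsample // min_natr_step.
- by exists i; rewrite // min_l ?g0.
- by exists k; rewrite // hN gL.
Qed.

Definition morse_const := 16 * K + 2 * (K * jump_const + K).

Lemma morse_const_ge0 : 0 <= morse_const.
Proof.
have hj := jump_const_ge0; have hKj : 0 <= K * jump_const by rewrite mulr_ge0 //; lraK.
by rewrite /morse_const; lraK.
Qed.

Lemma morse i a k : between i a k ->
  d (x i) (x a) + d (x a) (x k) <= d (x i) (x k) + morse_const.
Proof.
wlog hb : i k / i <= a <= k => [hwlog hik|_].
  case: (hik) => hb; first exact: hwlog.
  rewrite addrC (distC hmet (x a)) (distC hmet (x i)) (distC hmet (x i) (x k)).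
  by apply: hwlog => //; left.
have hA := axis_contracting; have hK0 := K_gt0.
have [m [j [hm hj hja]]] :=
  proj_index_crossing (proj_id hmet (axis_mem i)) (proj_id hmet (axis_mem k)) hb.
have := dist_via_proj hmet hgeo hK0 hA (axis_mem i) hj.
have := dist_via_proj hmet hgeo hK0 hA (axis_mem k) hj.
have : K * `|j - a|%:~R <= K * jump_const by rewrite ler_pM2l.
have := axis_dist_le j a; have := dist_ge0 hmet m (x j).
have := dist_triangle hmet (x i) (x j) (x a); have := dist_triangle hmet (x a) (x j) (x k).
rewrite (distC hmet (x i) m) in hm.
rewrite (distC hmet (x a) (x j)) (distC hmet (x j) (x i)) /morse_const; lraK.
Qed.

Lemma dist_proj_between z i a j : proj d (range x) z (x i) -> between i a j ->
  d z (x a) + d (x a) (x j) <= d z (x j) + 8 * K + morse_const.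
Proof.
move=> hz hb; have := dist_via_proj hmet hgeo K_gt0 axis_contracting (axis_mem j) hz.
have := morse hb; have := dist_triangle hmet z (x i) (x a); lraK.
Qed.

Lemma proj_sub_axis_exists (J : set int) z c : J c -> exists b, proj d (x @` J) z b.
Proof.
move=> hc; have [n hn] : exists n : nat, K * (2 * d z (x c) + K) < n%:R.
  by exists (Num.truncn (K * (2 * d z (x c) + K))).+1; apply: truncnS_gt.
(* Beyond the window, points of [x] are farther from [z] than [x c] is. *)
have [b hb hmin] := int_window_argmin (fun j => d z (x j)) n hc.
exists (x b); apply: projP; first by exists b.
move=> _ [j hj <-]; have [hjc|hjc] := lerP `|j - c| n; first exact: hmin.
apply: le_trans (hmin c hc _) _; first by rewrite subrr normr0.
rewrite leNgt; apply/negP => hjz.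
have : `|j - c|%:~R <= K * (2 * d z (x c) + K).
  apply: axis_index_le; have := dist_triangle hmet (x j) z (x c).
  by rewrite (distC hmet (x j) z); lraK.
have : (n%:R : R) < `|j - c|%:~R by rewrite -pmulrn ltr_nat; lia.
lra.
Qed.

Definition clamp_const := K * (K * (2 * K + K)) + K.

Lemma proj_sub_axis_near J z i c b : clamp J i c -> proj d (range x) z (x i) ->
  proj d (x @` J) z b -> d b (x c) <= 8 * K + morse_const.
Proof.
move=> hc hz hb; have [j hj ebj] := proj_mem hb; subst b.
have := dist_proj_between hz (clamp_between hc hj).
have := proj_le hb (ex_intro2 _ _ c hc.1 erefl).
by rewrite (distC hmet (x j)); lraK.
Qed.

Lemma clamp_dist_le_of_close J i k c c' : clamp J i c -> clamp J k c' ->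
  d (x i) (x k) <= 2 * K -> d (x c) (x c') <= clamp_const.
Proof.
move=> hc hc' /axis_index_le hik; apply: le_trans (axis_dist_le c c') _.
rewrite /clamp_const lerD2r ler_pM2l; last lraK.
by apply: le_trans hik; rewrite ler_int; apply: clamp_lipschitz hc hc'.
Qed.

Lemma dist_clamp_le_of_far z w i k c :
  proj d (range x) z (x i) -> proj d (range x) w (x k) -> between i c k ->
  d z (x i) + d w (x k) + d (x i) (x k) <= d z w + 16 * K ->
  d z (x c) <= d z w + 16 * K + morse_const.
Proof.
move=> hz hw hb hfar; have := morse hb.
have := dist_triangle hmet z (x i) (x c).
have := dist_ge0 hmet (x c) (x k); have := dist_ge0 hmet w (x k); lraK.
Qed.

Lemma sub_axis_contracting J K' : consecutive J -> 16 * K + morse_const < K' ->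
  2 * (8 * K + morse_const + clamp_const) <= K' -> contracting d K' (x @` J).
Proof.
move=> hJ hK'1 hK'2; have [c0 hc0] := hJ.1.
split; first by move=> z; apply: (proj_sub_axis_exists z hc0).
move=> z w hzw; have [qz hqz] := proj_sub_axis_exists z hc0.
rewrite (dist_set_proj hqz) -EFinD lee_fin in hzw.
have [i hi] := proj_axis_exists z; have [k hk] := proj_axis_exists w.
have [cz hcz] := clamp_exists i hJ; have [cw hcw] := clamp_exists k hJ.
have hG : d (x cz) (x cw) <= clamp_const.
  have hA := axis_contracting; have hK0 := K_gt0.
  case: (bounded_geodesic_image hmet hgeo hK0 hA hi hk) => [hclose|hfar].
    exact: clamp_dist_le_of_close hcz hcw hclose.
  case: (pselect (between i cz k)) => hb; last first.
    rewrite (clamp_outside hcz hcw hb) (distxx hmet) /clamp_const.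
    by rewrite addr_ge0 ?mulr_ge0 //; lraK.
  have := dist_clamp_le_of_far hi hk hb hfar.
  by have := proj_le hqz (ex_intro2 _ _ cz hcz.1 erefl); lraK.
apply: le_trans (diam_le_ball (c := x cz) (r := 8 * K + morse_const + clamp_const) hmet _) _.
  move=> a [ha|ha].
    have := proj_sub_axis_near hcz hi ha.
    by rewrite (distC hmet a); have := dist_ge0 hmet (x cz) (x cw); lraK.
  have := proj_sub_axis_near hcw hk ha; have := dist_triangle hmet (x cz) (x cw) a.
  by rewrite (distC hmet a); lraK.
by rewrite lee_fin.
Qed.

Lemma sub_axis_contracting_axis : exists K0, forall K' J, K0 <= K' -> consecutive J ->
  contracting_axis d K' J x.
Proof.
have hCM := morse_const_ge0.
have hG : 0 <= clamp_const by rewrite /clamp_const addr_ge0 ?mulr_ge0 //; lraK.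
exists (16 * K + morse_const + 2 * (8 * K + morse_const + clamp_const) + 1) => K' J hK' hJ.
split; last by apply: sub_axis_contracting => //; lraK.
move=> i j _ _; have := axis_dist_ge i j; have := axis_dist_le i j.
have hij : 0 <= `|i - j|%:~R :> R by rewrite intr_norm.
have : `|i - j|%:~R / K' <= `|i - j|%:~R / K by rewrite ler_wpM2l // lef_pV2 ?posrE; lraK.
have : K * `|i - j|%:~R <= K' * `|i - j|%:~R by rewrite ler_wpM2r //; lraK.
by split; lraK.
Qed.

End Axis.

Section Independent.
Variables (R : realType) (T : Type) (d : T -> T -> R).
Hypotheses (hmet : is_metric d) (hgeo : geodesic d).
Variables (K : R) (x y : int -> T).
Hypotheses (hK : 1 < K) (hx : contracting_axis d K setT x).
Hypotheses (hy : contracting_axis d K setT y) (hind : independent d x y).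
Local Ltac lraK := have ? := hK; lra.

Lemma proj_index_ub : exists N : R, forall m k, proj d (range x) (y m) (x k) -> k%:~R <= N.
Proof.
have hK0 := K_gt0 hK; have hJ := jump_const_ge0 hK.
have [i0 hi0] := proj_axis_exists hx (y 0).
have [B hB] := hind (M := 24 * K + 1) ltac:(lraK).
have hi0n : i0%:~R <= `|i0|%:~R :> R by rewrite ler_int ler_norm.
have hi0n0 : 0 <= `|i0|%:~R :> R by rewrite intr_norm.
have hBn : 0 <= `|B|%:~R :> R by rewrite intr_norm.
have hK3 : 0 <= K * (2 * K + K) by rewrite mulr_ge0 //; lraK.
(* A point on a geodesic from [y 0] to [y m] projecting near [x a] would be close
   both to [y] and to [x a], and [a] is too large for independence to allow that. *)
have [a ha] : exists a : int,
    `|i0|%:~R + `|B|%:~R + jump_const K + K * (2 * K + K) + 1 <= a%:~R.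
  by eexists; apply: Num.Theory.ceil_ge.
exists (a%:~R + jump_const K + K * (2 * K + K) + 1) => m k hk.
rewrite leNgt; apply/negP => hkN.
have [|z [j [hz hj hja]]] := proj_index_crossing hmet hgeo hK hx (a := a) hi0 hk.
  by apply/andP; split; rewrite -(ler_int R); lraK.
have := hja; rewrite intr_norm intrB ler_norml => /andP[hja1 hja2].
have hfar u v : K * (2 * K + K) < v%:~R - u%:~R -> 2 * K < d (x u) (x v).
  move=> huv; apply: (axis_dist_gt hK hx); rewrite distrC intr_norm intrB.
  exact: lt_le_trans (ler_norm _).
have [l hl] := proj_axis_exists hy z.
have hzl : d z (y l) <= 8 * K.
  apply: (proj_near_between hmet hgeo hK0 (axis_contracting hy) (axis_mem y 0) (axis_mem y m)).
  - by rewrite hz.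
  - exact: hl.
have hzj : d z (x j) <= 16 * K.
  apply: (proj_near_of_between hmet hgeo hK0 (axis_contracting hx) _ hi0 hj hk).
  - by rewrite hz.
  - by apply: hfar; lraK.
  - by apply: hfar; lraK.
have := dist_triangle hmet (x j) z (y l); rewrite (distC hmet (x j) z) => hjl.
have [hjB _] := hB j l ltac:(lraK).
have : j%:~R <= `|B|%:~R :> R.
  by rewrite ler_int; apply: le_trans (ler_norm j) (le_trans hjB (ler_norm B)).
lraK.
Qed.

End Independent.

Lemma range_reflect (T : Type) (x : int -> T) : range (fun i => x (- i)) = range x.
Proof.
by apply/seteqP; split => _ [j _ <-]; exists (- j) => //; rewrite opprK.
Qed.

Lemma contracting_axis_reflect (R : realType) (T : Type) (d : T -> T -> R) K x :
  contracting_axis d K setT x -> contracting_axis d K setT (fun i => x (- i)).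
Proof.
case=> hqi hc; split; last by rewrite range_reflect.
by move=> i j _ _; have := hqi (- i) (- j) I I; rewrite -opprD normrN.
Qed.

Lemma independent_reflect (R : realType) (T : Type) (d : T -> T -> R) (x y : int -> T) :
  independent d x y -> independent d (fun i => x (- i)) y.
Proof.
move=> hind M hM; have [B hB] := hind M hM; exists B => n m /hB.
by rewrite normrN.
Qed.

Section Origin.
Variables (R : realType) (T : Type) (d : T -> T -> R).
Hypotheses (hmet : is_metric d) (hgeo : geodesic d).
Variables (K : R) (x y : int -> T).
Hypotheses (hK : 1 < K) (hx : contracting_axis d K setT x).
Hypotheses (hy : contracting_axis d K setT y) (hind : independent d x y).
Local Ltac lraK := have ? := hK; lra.

Lemma proj_index_bounded :
  exists N : R, forall m k, proj d (range x) (y m) (x k) -> `|k|%:~R <= N.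
Proof.
have [N1 hN1] := proj_index_ub hmet hgeo hK hx hy hind.
have [N2 hN2] := proj_index_ub hmet hgeo hK (contracting_axis_reflect hx) hy
  (independent_reflect hind).
exists (Num.max N1 N2) => m k hk.
have hk' : proj d (range (fun i => x (- i))) (y m) (x (- - k)) by rewrite range_reflect opprK.
rewrite intr_norm ler_norml lerNl -intrN !le_max.
by rewrite (hN1 _ _ hk) (hN2 _ _ hk') orbT.
Qed.

Lemma proj_other_axis_near_origin : exists C : R, forall J, consecutive J -> J 0 ->
  (diam d ([set x 0%R] `|` proj_set d (x @` J) (range y)) < C%:E)%E.
Proof.
have [N hN] := proj_index_bounded.
have hN0 : 0 <= N.
  by have [k hk] := proj_axis_exists hx (y 0); apply: le_trans (hN _ _ hk); rewrite intr_norm.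
have hKN : 0 <= K * N by rewrite mulr_ge0 //; lraK.
have hCM := morse_const_ge0 hK.
exists (2 * (8 * K + morse_const K + K * N + K) + 1) => J hJ hJ0.
apply: le_lt_trans (diam_le_ball (c := x 0) (r := 8 * K + morse_const K + K * N + K) hmet _) _;
  last by rewrite lte_fin; lraK.
move=> a [->|[_ [m _ <-] ha]]; first by rewrite (distxx hmet); lraK.
have [k hk] := proj_axis_exists hx (y m); have [c hc] := clamp_exists k hJ.
have h0c : `|c - 0|%:~R <= N :> R.
  apply: le_trans (hN _ _ hk); rewrite ler_int subr0.
  by have := clamp_lipschitz hc (conj hJ0 (Or31 _ _ (erefl 0))); rewrite !subr0.
have := axis_dist_le hx 0 c; have : K * `|0 - c|%:~R <= K * N.
  by rewrite ler_pM2l ?(K_gt0 hK) // distrC.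
have := proj_sub_axis_near hmet hgeo hK hx hc hk ha.
by have := dist_triangle hmet (x 0) (x c) a; rewrite (distC hmet a); lraK.
Qed.

Lemma proj_nonpositive_near_origin : exists C : R, forall M : nat,
  (diam d ([set x 0%R] `|` proj_set d (x @` [set i : int | (0 <= i <= M%:Z)%R])
                                        (x @` [set i : int | (i <= 0)%R])) < C%:E)%E.
Proof.
have hCM := morse_const_ge0 hK.
exists (2 * (8 * K + morse_const K) + 1) => M.
apply: le_lt_trans (diam_le_ball (c := x 0) (r := 8 * K + morse_const K) hmet _) _;
  last by rewrite lte_fin; lraK.
move=> a [->|[_ [i hi0 <-] ha]]; first by rewrite (distxx hmet); lraK.
have hc : clamp [set i : int | 0 <= i <= M%:Z] i 0.
  split; first by rewrite /=; lia.
  have [->|hi] := eqVneq i 0; first exact: Or31.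
  by apply: Or32; split => [|j /andP[]//]; rewrite lt_neqAle hi hi0.
have := proj_sub_axis_near hmet hgeo hK hx hc (proj_id hmet (axis_mem x i)) ha.
by rewrite distC.
Qed.

End Origin.

Theorem lemma3p10 (R : realType) (T : Type) (d : T -> T -> R)
  (hmet : is_metric d) (hgeo : geodesic d)
  (K : R) (hK : 1 < K) (x y : int -> T)
  (hx : contracting_axis d K setT x) (hy : contracting_axis d K setT y)
  (hind : independent d x y) :
  exists K' : R, 0 < K' /\
    (forall J : set int, consecutive J ->
       contracting_axis d K' J x /\ contracting_axis d K' J y) /\
    (forall J : set int, consecutive J -> J 0 ->
       (diam d ([set x 0%R] `|` proj_set d (x @` J) (range y)) < K'%:E)%E) /\
    (forall M : nat, (0 < M)%N ->
       (diam d ([set x 0%R] `|` proj_set d (x @` [set i : int | (0 <= i <= M%:Z)%R])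
                                        (x @` [set i : int | (i <= 0)%R]))
          < K'%:E)%E).
Proof.
have [K1 hK1] := sub_axis_contracting_axis hmet hgeo hK hx.
have [K2 hK2] := sub_axis_contracting_axis hmet hgeo hK hy.
have [C2 hC2] := proj_other_axis_near_origin hmet hgeo hK hx hy hind.
have [C3 hC3] := proj_nonpositive_near_origin hmet hgeo hK hx.
exists (Num.max 1 (Num.max (Num.max K1 K2) (Num.max C2 C3))).
split; first by rewrite lt_max ltr01.
split; first by move=> J hJ; split; [apply: hK1|apply: hK2]; rewrite // !le_max lexx !orbT.
split => [J hJ hJ0|M _].
  by apply: lt_le_trans (hC2 J hJ hJ0) _; rewrite lee_fin !le_max lexx !orbT.
by apply: lt_le_trans (hC3 M) _; rewrite lee_fin !le_max lexx !orbT.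
Qed.
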